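(* Every monadic ortholattice $(L,\exists)$ embeds (as a monadic ortholattice) into $\mathcal{L}(\mathcal{X})$ for some monadic orthoframe $\mathcal{X}$; and if $L$ is complete, $(L,\exists)$ is isomorphic to $\mathcal{L}(\mathcal{X})$ for some monadic orthoframe $\mathcal{X}$. (Specifically one may take $\mathcal{X}=(L\setminus\{0\},\perp,R)$ with $x\perp y\iff x\le y^\perp$ and $x\,R\,y\iff y\le\exists x$, and the embedding $a\mapsto\{x\in L\setminus\{0\}: x\le a\}$.)
   Context: A monadic ortholattice is an ortholattice (bounded lattice with an order-inverting period-two $\perp$ with $x\wedge x^\perp=0$, $x\vee x^\perp=1$) with a unary $\exists$ satisfying (Q1) $\exists0=0$, (Q2) $p\le\exists p$, (Q3) $\exists(p\vee q)=\exists p\vee\exists q$, (Q4) $\exists\exists p=\exists p$, (Q5) $\exists(\exists p)^\perp=(\exists p)^\perp$. An orthoframe $(X,\perp)$ is a set with an irreflexive symmetric relation; $A^\perp=\{x: a\perp x\ \forall a\in A\}$; $\mathcal{L}(X,\perp)=\{A: A=A^{\perp\perp}\}$ is a complete ortholattice (meets = intersections, orthocomplement $A^\perp$). $R[A]=\{y: x\,R\,y \text{ for some } x\in A\}$. A monadic orthoframe is $(X,\perp,R)$ with (M1) $\perp$ an orthogonality relation, (M2) $R$ reflexive and transitive, (M3) $R[R[\{x\}]^\perp]\subseteq R[\{x\}]^\perp$ for each $x$. $\mathcal{L}(\mathcal{X})=(\mathcal{L}(X,\perp),\exists_R)$ with $\exists_RA=R[A]^{\perp\perp}$. *)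

Record ortholattice := OL {
  ol_car :> Type;
  ol_le : ol_car -> ol_car -> Prop;
  ol_meet : ol_car -> ol_car -> ol_car;
  ol_join : ol_car -> ol_car -> ol_car;
  ol_bot : ol_car;
  ol_top : ol_car;
  ol_compl : ol_car -> ol_car;
  ol_le_refl : forall a, ol_le a a;
  ol_le_trans : forall a b c, ol_le a b -> ol_le b c -> ol_le a c;
  ol_le_antisym : forall a b, ol_le a b -> ol_le b a -> a = b;
  ol_meet_l : forall a b, ol_le (ol_meet a b) a;
  ol_meet_r : forall a b, ol_le (ol_meet a b) b;
  ol_meet_glb : forall a b c, ol_le c a -> ol_le c b -> ol_le c (ol_meet a b);
  ol_join_l : forall a b, ol_le a (ol_join a b);
  ol_join_r : forall a b, ol_le b (ol_join a b);
  ol_join_lub : forall a b c, ol_le a c -> ol_le b c -> ol_le (ol_join a b) c;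
  ol_bot_le : forall a, ol_le ol_bot a;
  ol_le_top : forall a, ol_le a ol_top;
  ol_compl_anti : forall a b, ol_le a b -> ol_le (ol_compl b) (ol_compl a);
  ol_compl_invol : forall a, ol_compl (ol_compl a) = a;
  ol_meet_compl : forall a, ol_meet a (ol_compl a) = ol_bot;
  ol_join_compl : forall a, ol_join a (ol_compl a) = ol_top
}.

Arguments ol_le {o}.
Arguments ol_meet {o}.
Arguments ol_join {o}.
Arguments ol_bot {o}.
Arguments ol_top {o}.
Arguments ol_compl {o}.

Definition is_quantifier (L : ortholattice) (ex : L -> L) : Prop :=
  ex ol_bot = ol_bot /\
  (forall p, ol_le p (ex p)) /\
  (forall p q, ex (ol_join p q) = ol_join (ex p) (ex q)) /\
  (forall p, ex (ex p) = ex p) /\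
  (forall p, ex (ol_compl (ex p)) = ol_compl (ex p)).

Definition ol_complete (L : ortholattice) : Prop :=
  forall S : L -> Prop, exists s : L,
    (forall a, S a -> ol_le a s) /\
    (forall u, (forall a, S a -> ol_le a u) -> ol_le s u).

Definition perp_set {X : Type} (perp : X -> X -> Prop) (A : X -> Prop) : X -> Prop :=
  fun x => forall a, A a -> perp a x.

Definition image_rel {X : Type} (R : X -> X -> Prop) (A : X -> Prop) : X -> Prop :=
  fun y => exists x, A x /\ R x y.

Definition set_eq {X : Type} (A B : X -> Prop) : Prop := forall x, A x <-> B x.

(* A is a member of L(X, perp): A = A^{perp perp} *)
Definition perp_closed {X : Type} (perp : X -> X -> Prop) (A : X -> Prop) : Prop :=
  set_eq A (perp_set perp (perp_set perp A)).

Definition orthogonality {X : Type} (perp : X -> X -> Prop) : Prop :=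
  (forall x, ~ perp x x) /\ (forall x y, perp x y -> perp y x).

Definition monadic_orthoframe {X : Type} (perp R : X -> X -> Prop) : Prop :=
  orthogonality perp /\
  ((forall x, R x x) /\ (forall x y z, R x y -> R y z -> R x z)) /\
  (forall x y, image_rel R (perp_set perp (image_rel R (fun z => z = x))) y ->
               perp_set perp (image_rel R (fun z => z = x)) y).

Definition LX_meet {X : Type} (A B : X -> Prop) : X -> Prop := fun x => A x /\ B x.
Definition LX_join {X : Type} (perp : X -> X -> Prop) (A B : X -> Prop) : X -> Prop :=
  perp_set perp (perp_set perp (fun x => A x \/ B x)).
Definition LX_bot {X : Type} (perp : X -> X -> Prop) : X -> Prop :=
  perp_set perp (perp_set perp (fun _ => False)).
Definition LX_top {X : Type} : X -> Prop := fun _ => True.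
Definition LX_exists {X : Type} (perp R : X -> X -> Prop) (A : X -> Prop) : X -> Prop :=
  perp_set perp (perp_set perp (image_rel R A)).

Definition mol_hom (L : ortholattice) (ex : L -> L)
    {X : Type} (perp R : X -> X -> Prop) (f : L -> (X -> Prop)) : Prop :=
  (forall a, perp_closed perp (f a)) /\
  (forall a b, set_eq (f (ol_meet a b)) (LX_meet (f a) (f b))) /\
  (forall a b, set_eq (f (ol_join a b)) (LX_join perp (f a) (f b))) /\
  (forall a, set_eq (f (ol_compl a)) (perp_set perp (f a))) /\
  set_eq (f ol_bot) (LX_bot perp) /\
  set_eq (f ol_top) LX_top /\
  (forall a, set_eq (f (ex a)) (LX_exists perp R (f a))).

Definition mol_embedding (L : ortholattice) (ex : L -> L)
    {X : Type} (perp R : X -> X -> Prop) (f : L -> (X -> Prop)) : Prop :=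
  mol_hom L ex perp R f /\
  (forall a b, set_eq (f a) (f b) -> a = b).

Definition mol_isomorphism (L : ortholattice) (ex : L -> L)
    {X : Type} (perp R : X -> X -> Prop) (f : L -> (X -> Prop)) : Prop :=
  mol_embedding L ex perp R f /\
  (forall A : X -> Prop, perp_closed perp A -> exists a, set_eq (f a) A).

From Stdlib Require Import Classical Setoid Morphisms.

(* With x ⊥ y iff x <= y^⊥, the orthogonal of the
   down-set of a is the down-set of a^⊥, so down-sets are closed and all the
   ortholattice operations are transported; with x R y iff y <= ∃x, the
   R-image of the down-set of a is the down-set of ∃a, and (Q5) is exactly
   what makes (M3) hold.  If L is complete, a closed set A is the down-set of
   the join of its elements, since A^⊥ is the down-set of the complement of
   that join. *)

#[export] Instance set_eq_equivalence {X : Type} : Equivalence (@set_eq X).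
Proof. constructor; unfold set_eq; firstorder. Qed.

#[export] Instance perp_set_proper {X : Type} (perp : X -> X -> Prop) :
  Proper (set_eq ==> set_eq) (perp_set perp).
Proof. intros A B HAB x; unfold perp_set; firstorder. Qed.

#[export] Instance image_rel_proper {X : Type} (R : X -> X -> Prop) :
  Proper (set_eq ==> set_eq) (image_rel R).
Proof. intros A B HAB x; unfold image_rel; firstorder. Qed.

#[export] Instance LX_meet_proper {X : Type} :
  Proper (set_eq ==> set_eq ==> set_eq) (@LX_meet X).
Proof. intros A A' HA B B' HB x; unfold LX_meet; firstorder. Qed.

Lemma perp_set_union {X : Type} (perp : X -> X -> Prop) (A B : X -> Prop) :
  set_eq (perp_set perp (fun x => A x \/ B x))
         (LX_meet (perp_set perp A) (perp_set perp B)).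
Proof. unfold set_eq, perp_set, LX_meet; firstorder. Qed.

Lemma perp_set_empty {X : Type} (perp : X -> X -> Prop) :
  set_eq (perp_set perp (fun _ => False)) LX_top.
Proof. unfold set_eq, perp_set, LX_top; firstorder. Qed.

Section Ortholattice.
Variable L : ortholattice.
Implicit Types a b : L.

Lemma compl_le_swap a b : ol_le a (ol_compl b) -> ol_le b (ol_compl a).
Proof.
  intro H. apply ol_compl_anti in H. rewrite ol_compl_invol in H. exact H.
Qed.

Lemma le_bot_eq a : ol_le a ol_bot -> a = ol_bot.
Proof. intro H. apply ol_le_antisym; [exact H | apply ol_bot_le]. Qed.

Lemma le_join_eq a b : ol_le a b -> ol_join a b = b.
Proof.
  intro H. apply ol_le_antisym.
  - apply ol_join_lub; [exact H | apply ol_le_refl].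
  - apply ol_join_r.
Qed.

Lemma compl_top : ol_compl (@ol_top L) = ol_bot.
Proof.
  rewrite <- (ol_meet_compl L ol_top). apply ol_le_antisym.
  - apply ol_meet_glb; [apply ol_le_top | apply ol_le_refl].
  - apply ol_meet_r.
Qed.

Lemma compl_bot : ol_compl (@ol_bot L) = ol_top.
Proof. rewrite <- compl_top, ol_compl_invol. reflexivity. Qed.

Lemma compl_meet_compl a b :
  ol_compl (ol_meet (ol_compl a) (ol_compl b)) = ol_join a b.
Proof.
  apply ol_le_antisym.
  - rewrite <- (ol_compl_invol L (ol_join a b)). apply ol_compl_anti.
    apply ol_meet_glb; apply ol_compl_anti; [apply ol_join_l | apply ol_join_r].
  - apply ol_join_lub; apply compl_le_swap; [apply ol_meet_l | apply ol_meet_r].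
Qed.

End Ortholattice.

Section Quantifier.
Variables (L : ortholattice) (ex : L -> L).
Hypothesis Hex : is_quantifier L ex.

Lemma ex_bot : ex ol_bot = ol_bot.
Proof. exact (proj1 Hex). Qed.

Lemma le_ex (a : L) : ol_le a (ex a).
Proof. exact (proj1 (proj2 Hex) a). Qed.

Lemma ex_idem (a : L) : ex (ex a) = ex a.
Proof. exact (proj1 (proj2 (proj2 (proj2 Hex))) a). Qed.

Lemma ex_compl_ex (a : L) : ex (ol_compl (ex a)) = ol_compl (ex a).
Proof. exact (proj2 (proj2 (proj2 (proj2 Hex))) a). Qed.

Lemma ex_mono (a b : L) : ol_le a b -> ol_le (ex a) (ex b).
Proof.
  intro H. rewrite <- (le_join_eq L a b H), (proj1 (proj2 (proj2 Hex))).
  apply ol_join_l.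
Qed.

End Quantifier.

Section CanonicalFrame.
Variable L : ortholattice.

Definition point : Type := {x : L | x <> ol_bot}.

Definition orth (x y : point) : Prop := ol_le (proj1_sig x) (ol_compl (proj1_sig y)).

Definition down (a : L) : point -> Prop := fun x => ol_le (proj1_sig x) a.

Lemma orth_orthogonality : orthogonality orth.
Proof.
  split.
  - intros [x Hx] Hxx. apply Hx, le_bot_eq. rewrite <- (ol_meet_compl L x).
    apply ol_meet_glb; [apply ol_le_refl | exact Hxx].
  - intros x y. apply compl_le_swap.
Qed.

Lemma down_le (a b : L) : (forall x, down a x -> down b x) -> ol_le a b.
Proof.
  intro Hab. destruct (classic (a = ol_bot)) as [-> | Ha].
  - apply ol_bot_le.
  - apply (Hab (exist _ a Ha)), ol_le_refl.
Qed.

Lemma down_inj (a b : L) : set_eq (down a) (down b) -> a = b.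
Proof.
  intro Hab. apply ol_le_antisym; apply down_le; intro x; apply Hab.
Qed.

Lemma perp_set_down (a : L) : set_eq (perp_set orth (down a)) (down (ol_compl a)).
Proof.
  intro y; unfold perp_set, down, orth; split.
  - intro Hy. destruct (classic (a = ol_bot)) as [-> | Ha].
    + rewrite compl_bot. apply ol_le_top.
    + apply compl_le_swap, (Hy (exist _ a Ha)), ol_le_refl.
  - intros Hy x Hx. apply (ol_le_trans _ _ _ _ Hx), compl_le_swap, Hy.
Qed.

Lemma perp_closed_down (a : L) : perp_closed orth (down a).
Proof.
  unfold perp_closed. rewrite !perp_set_down, ol_compl_invol. reflexivity.
Qed.

Lemma down_meet (a b : L) : set_eq (down (ol_meet a b)) (LX_meet (down a) (down b)).
Proof.
  intro x; unfold down, LX_meet; split.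
  - intro H; split; eapply ol_le_trans; eauto; [apply ol_meet_l | apply ol_meet_r].
  - intros [Ha Hb]; apply ol_meet_glb; assumption.
Qed.

Lemma down_join (a b : L) : set_eq (down (ol_join a b)) (LX_join orth (down a) (down b)).
Proof.
  unfold LX_join.
  rewrite perp_set_union, !perp_set_down, <- down_meet, perp_set_down, compl_meet_compl.
  reflexivity.
Qed.

Lemma down_top : set_eq (down ol_top) LX_top.
Proof. intro x; split; intros _; [exact I | apply ol_le_top]. Qed.

Lemma down_bot : set_eq (down ol_bot) (LX_bot orth).
Proof.
  unfold LX_bot. rewrite perp_set_empty, <- down_top, perp_set_down, compl_top.
  reflexivity.
Qed.

Lemma down_surjective (HL : ol_complete L) (A : point -> Prop) :
  perp_closed orth A -> exists a, set_eq (down a) A.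
Proof.
  intro HA.
  destruct (HL (fun a => exists x, A x /\ proj1_sig x = a)) as [s [Hub Hleast]].
  exists s.
  assert (HperpA : set_eq (perp_set orth A) (down (ol_compl s))).
  { intro y; unfold perp_set, down, orth; split.
    - intro Hy. apply compl_le_swap, Hleast.
      intros a [x [Hx <-]]. apply Hy, Hx.
    - intros Hy x Hx. apply (ol_le_trans _ _ s).
      + apply Hub. exists x. auto.
      + apply compl_le_swap, Hy. }
  unfold perp_closed in HA.
  rewrite HA, HperpA, perp_set_down, ol_compl_invol. reflexivity.
Qed.

Variable ex : L -> L.
Hypothesis Hex : is_quantifier L ex.

Definition ex_rel (x y : point) : Prop := ol_le (proj1_sig y) (ex (proj1_sig x)).

Lemma image_ex_rel_down (a : L) : set_eq (image_rel ex_rel (down a)) (down (ex a)).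
Proof.
  intro y; unfold image_rel, down, ex_rel; split.
  - intros [x [Hx Hy]]. apply (ol_le_trans _ _ _ _ Hy), (ex_mono L ex Hex), Hx.
  - intro Hy. destruct (classic (a = ol_bot)) as [-> | Ha].
    + destruct y as [y Hy0]. simpl in Hy. rewrite (ex_bot L ex Hex) in Hy.
      exfalso. apply Hy0, le_bot_eq, Hy.
    + exists (exist _ a Ha). split; [apply ol_le_refl | exact Hy].
Qed.

Lemma image_ex_rel_point (x : point) :
  set_eq (image_rel ex_rel (fun z => z = x)) (down (ex (proj1_sig x))).
Proof.
  intro y; unfold image_rel, down; split.
  - intros [z [-> Hy]]. exact Hy.
  - intro Hy. exists x. auto.
Qed.

Lemma point_frame_monadic : monadic_orthoframe orth ex_rel.
Proof.
  split; [exact orth_orthogonality | split; [split |]].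
  - intro x. apply (le_ex L ex Hex).
  - intros x y z Hxy Hyz. unfold ex_rel in *.
    rewrite <- (ex_idem L ex Hex). apply (ol_le_trans _ _ _ _ Hyz), (ex_mono L ex Hex), Hxy.
  - intro x.
    assert (HM3 : set_eq (image_rel ex_rel (perp_set orth (image_rel ex_rel (fun z => z = x))))
                         (perp_set orth (image_rel ex_rel (fun z => z = x)))).
    { rewrite image_ex_rel_point, perp_set_down, image_ex_rel_down, (ex_compl_ex L ex Hex).
      reflexivity. }
    intro y. apply HM3.
Qed.

Lemma down_ex (a : L) : set_eq (down (ex a)) (LX_exists orth ex_rel (down a)).
Proof.
  unfold LX_exists. rewrite image_ex_rel_down. apply perp_closed_down.
Qed.

Lemma down_mol_embedding : mol_embedding L ex orth ex_rel down.
Proof.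
  split; [| exact down_inj].
  split; [exact perp_closed_down |].
  split; [exact down_meet |].
  split; [exact down_join |].
  split; [intro a; symmetry; apply perp_set_down |].
  split; [exact down_bot |].
  split; [exact down_top | exact down_ex].
Qed.

End CanonicalFrame.

Theorem mainTheorem19 (L : ortholattice) (ex : L -> L) (Hex : is_quantifier L ex) :
  (exists (X : Type) (perp R : X -> X -> Prop) (f : L -> (X -> Prop)),
      monadic_orthoframe perp R /\ mol_embedding L ex perp R f) /\
  (ol_complete L ->
   exists (X : Type) (perp R : X -> X -> Prop) (f : L -> (X -> Prop)),
      monadic_orthoframe perp R /\ mol_isomorphism L ex perp R f).
Proof.
  pose proof (point_frame_monadic L ex Hex) as Hframe.
  pose proof (down_mol_embedding L ex Hex) as Hemb.
  split.
  - exists (point L), (orth L), (ex_rel L ex), (down L). auto.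
  - intro HL. exists (point L), (orth L), (ex_rel L ex), (down L).
    split; [exact Hframe |].
    split; [exact Hemb | exact (down_surjective L HL)].
Qed.
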